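(* Let $\mathbf{u}_j\in c_0$, $j\in\mathbb{N}_m$, be linearly independent, $\mathbf{y}\in\mathbb{R}^m$, $\mathcal{L}(\mathbf{x}):=[\langle\mathbf{u}_j,\mathbf{x}\rangle:j\in\mathbb{N}_m]$ for $\mathbf{x}\in\ell_1(\mathbb{N})$, and $\mathcal{L}^*(\mathbf{c}):=\sum_{j\in\mathbb{N}_m}c_j\mathbf{u}_j$ for $\mathbf{c}\in\mathbb{R}^m$. Then $\hat{\mathbf{x}}\in\ell_1(\mathbb{N})$ is a solution of $\inf\{\|\mathbf{x}\|_1+\iota_{\mathbf{y}}(\mathcal{L}(\mathbf{x})):\mathbf{x}\in\ell_1(\mathbb{N})\}$ (equivalently, of $\inf\{\|\mathbf{x}\|_1:\mathbf{x}\in\ell_1(\mathbb{N}),\ \mathcal{L}(\mathbf{x})=\mathbf{y}\}$) if and only if there exists $\mathbf{c}\in\mathbb{R}^m$ such that $$\mathbf{c}=\mathrm{prox}_{\iota_{\mathbf{y}}^*}(\mathbf{c}+\mathcal{L}(\hat{\mathbf{x}}))\quad\text{and}\quad \hat{\mathbf{x}}=\mathrm{prox}_{\|\cdot\|_1,\ell_2(\mathbb{N}),\mathcal{T}_0}\big(\hat{\mathbf{x}}-\mathcal{S}\mathcal{L}^*(\mathbf{c})\big).$$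
   Context: $\ell_1(\mathbb{N})$, $\ell_2(\mathbb{N})$ are the usual sequence spaces; $c_0$ is the space of real sequences tending to $0$ with $\|\mathbf{u}\|_\infty=\sup_j|u_j|$; $\langle\mathbf{u},\mathbf{x}\rangle:=\sum_ju_jx_j$; $\mathbb{N}_m:=\{1,\dots,m\}$. $\iota_{\mathbf{y}}:\mathbb{R}^m\to\mathbb{R}\cup\{+\infty\}$ is $0$ at $\mathbf{y}$ and $+\infty$ elsewhere; its convex conjugate is $\iota_{\mathbf{y}}^*(\mathbf{c})=\langle\mathbf{y},\mathbf{c}\rangle_{\mathbb{R}^m}$. For a convex $\psi:\mathbb{R}^m\to\mathbb{R}\cup\{+\infty\}$, $\mathrm{prox}_\psi(\mathbf{a}):=\arg\min\{\frac12\|\mathbf{a}-\mathbf{c}\|_{\mathbb{R}^m}^2+\psi(\mathbf{c}):\mathbf{c}\in\mathbb{R}^m\}$ (so $\mathrm{prox}_{\iota_{\mathbf{y}}^*}(\mathbf{a})=\mathbf{a}-\mathbf{y}$). $\mathcal{T}_0:\ell_1(\mathbb{N})\to\ell_2(\mathbb{N})$ is the inclusion map, and $\mathrm{prox}_{\|\cdot\|_1,\ell_2(\mathbb{N}),\mathcal{T}_0}(\mathbf{x}):=\arg\min\{\frac12\|\mathbf{x}-\mathbf{z}\|_2^2+\|\mathbf{z}\|_1:\mathbf{z}\in\ell_1(\mathbb{N})\}=(\max\{|x_j|-1,0\}\,\mathrm{sign}(x_j):j\in\mathbb{N})$. For $\mathbf{u}\in c_0$, $\mathbb{N}(\mathbf{u}):=\{j:|u_j|=\|\mathbf{u}\|_\infty\}$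 and the truncation $\mathcal{S}(\mathbf{u})$ is the sequence equal to $u_j$ for $j\in\mathbb{N}(\mathbf{u})$ and $0$ otherwise. *)

From Stdlib Require Import Reals ClassicalEpsilon.
From Coquelicot Require Import Coquelicot.
Open Scope R_scope.

(* Real sequences indexed by nat (index 0 plays the role of 1). *)
Definition seqR := nat -> R.

(* Vectors of R^m are represented by nat -> R, only components j < m matter. *)
Fixpoint fsum (m : nat) (f : nat -> R) : R :=
  match m with O => 0 | S k => fsum k f + f k end.

Definition in_l1 (x : seqR) : Prop := ex_series (fun j => Rabs (x j)).
Definition in_c0 (u : seqR) : Prop := is_lim_seq u 0.

Definition norm1 (x : seqR) : R := Series (fun j => Rabs (x j)).
Definition norm2sq (x : seqR) : R := Series (fun j => (x j) ^ 2).
Definition inner (u x : seqR) : R := Series (fun j => u j * x j).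

Definition norm_inf (u : seqR) : R := real (Sup_seq (fun j => Rabs (u j))).
Definition trunc (u : seqR) : seqR :=
  fun j => if Req_EM_T (Rabs (u j)) (norm_inf u) then u j else 0.

Definition Lop (m : nat) (u : nat -> seqR) (x : seqR) : nat -> R :=
  fun j => inner (u j) x.
Definition Ladj (m : nat) (u : nat -> seqR) (c : nat -> R) : seqR :=
  fun k => fsum m (fun j => c j * u j k).

Definition lin_indep (m : nat) (u : nat -> seqR) : Prop :=
  forall c : nat -> R, (forall k, Ladj m u c k = 0) ->
    forall j, (j < m)%nat -> c j = 0.

Definition eqRm (m : nat) (a b : nat -> R) : Prop :=
  forall j, (j < m)%nat -> a j = b j.

Definition iota_y (m : nat) (y a : nat -> R) : Rbar :=
  match excluded_middle_informative (eqRm m a y) with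
  | left _ => Finite 0 | right _ => p_infty end.
Definition iota_y_conj (m : nat) (y c : nat -> R) : R :=
  fsum m (fun j => y j * c j).

Definition objective (m : nat) (u : nat -> seqR) (y : nat -> R) (x : seqR) : Rbar :=
  Rbar_plus (Finite (norm1 x)) (iota_y m y (Lop m u x)).

Definition is_solution (m : nat) (u : nat -> seqR) (y : nat -> R) (xh : seqR) : Prop :=
  in_l1 xh /\ forall x, in_l1 x -> Rbar_le (objective m u y xh) (objective m u y x).

Definition is_prox_Rm (m : nat) (psi : (nat -> R) -> R) (a c : nat -> R) : Prop :=
  forall d : nat -> R,
    / 2 * fsum m (fun j => (a j - c j) ^ 2) + psi c
    <= / 2 * fsum m (fun j => (a j - d j) ^ 2) + psi d.

Definition is_prox_l1 (x z : seqR) : Prop :=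
  in_l1 z /\ forall w, in_l1 w ->
    / 2 * norm2sq (fun j => x j - z j) + norm1 z
    <= / 2 * norm2sq (fun j => x j - w j) + norm1 w.

(* For a feasible xh both directions reduce to
   the existence of a dual certificate: some c in R^m such that L^* c is a
   subgradient of ||.||_1 at xh, i.e. |(L^* c)_k| <= 1 and (L^* c)_k xh_k = |xh_k|.
   - Sufficiency is weak duality, ||xh||_1 = <c, L xh> = <c, L x> <= ||x||_1.
   - Necessity is a finite-dimensional Hahn-Banach argument, proved for an
     abstract sublinear functional and finitely many linear constraints by
     extending across one hyperplane at a time; the same argument with the
     zero functional shows that L is onto, hence a solution is feasible.
   The fixed-point conditions of the theorem are then translated coordinatewise:
   c = prox_{iota_y^*}(c + L xh) says L xh = y, and xh = prox_{||.||_1}(xh - s)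
   says -s is a subgradient at xh (s finitely supported); the truncation S keeps
   only the coordinates where |L^* c| = ||L^* c||_inf, which preserves (and, for
   xh <> 0, reflects) the subgradient property. *)

From Stdlib Require Import Reals.
From Coquelicot Require Import Coquelicot.
From Stdlib Require Import Lra Lia Psatz ClassicalEpsilon FunctionalExtensionality.
Open Scope R_scope.

Lemma ex_series_plusR (a b : nat -> R) :
  ex_series a -> ex_series b -> ex_series (fun n => a n + b n).
Proof. intros; apply (ex_series_plus a b); auto. Qed.

Lemma ex_series_minusR (a b : nat -> R) :
  ex_series a -> ex_series b -> ex_series (fun n => a n - b n).
Proof. intros; apply (ex_series_minus a b); auto. Qed.

Lemma ex_series_scalR (c : R) (a : nat -> R) :
  ex_series a -> ex_series (fun n => c * a n).
Proof. intros; apply (ex_series_scal_l c a); auto. Qed.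

Lemma ex_series_Rle (a b : nat -> R) :
  (forall n, Rabs (a n) <= b n) -> ex_series b -> ex_series a.
Proof. intros; apply (@ex_series_le R_AbsRing R_CompleteNormedModule a b); auto. Qed.

Lemma ex_series_shiftR (a : nat -> R) (N : nat) :
  ex_series a <-> ex_series (fun k => a (N + k)%nat).
Proof. apply (@ex_series_incr_n R_AbsRing R_NormedModule). Qed.

Definition unitv (k : nat) (a : R) : seqR := fun j => if Nat.eqb j k then a else 0.

Lemma sum_n_unitv (k : nat) (a : R) (n : nat) :
  sum_n (unitv k a) n = if Nat.leb k n then a else 0.
Proof.
  induction n as [| n IH].
  - rewrite sum_O. unfold unitv. destruct k; reflexivity.
  - rewrite sum_Sn, IH. unfold unitv.
    destruct (Nat.leb_spec k n); destruct (Nat.eqb_spec (S n) k);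
      destruct (Nat.leb_spec k (S n)); try lia; unfold plus; simpl; lra.
Qed.

Lemma is_series_unitv (k : nat) (a : R) : is_series (unitv k a) a.
Proof.
  change (is_lim_seq (sum_n (unitv k a)) a).
  apply is_lim_seq_ext_loc with (fun _ => a); [| apply is_lim_seq_const].
  exists k. intros n Hn. rewrite sum_n_unitv. now apply Nat.leb_le in Hn as ->.
Qed.

Lemma Series_unitv (k : nat) (a : R) : Series (unitv k a) = a.
Proof. apply is_series_unique, is_series_unitv. Qed.

Lemma ex_series_unitv (k : nat) (a : R) : ex_series (unitv k a).
Proof. exists a; apply is_series_unitv. Qed.

Lemma Series_zero : Series (fun _ => 0) = 0.
Proof.
  transitivity (Series (unitv 0 0)); [| apply Series_unitv].
  apply Series_ext. intro n; unfold unitv. now destruct (n =? 0)%nat.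
Qed.

Definition fin_supp (s : seqR) : Prop := exists N, forall k, (N <= k)%nat -> s k = 0.

Lemma ex_series_fin_supp (s : seqR) : fin_supp s -> ex_series s.
Proof.
  intros [N HN]. apply (ex_series_shiftR s N).
  apply ex_series_Rle with (unitv 0 0); [| apply ex_series_unitv].
  intro n. rewrite HN by lia. unfold unitv. destruct (n =? 0)%nat; rewrite Rabs_R0; lra.
Qed.

Lemma Series_nonneg (a : nat -> R) : (forall n, 0 <= a n) -> ex_series a -> 0 <= Series a.
Proof. intros Ha Hs. rewrite <- Series_zero. apply Series_le; auto. intro n; split; [lra | auto]. Qed.

Lemma series_le (a b : nat -> R) :
  (forall n, a n <= b n) -> ex_series a -> ex_series b -> Series a <= Series b.
Proof.
  intros Hab Ha Hb. assert (H : 0 <= Series (fun n => b n - a n)).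
  { apply Series_nonneg; [intro n; specialize (Hab n); lra | apply ex_series_minusR; auto]. }
  rewrite Series_minus in H; auto. lra.
Qed.

Lemma series_le_term (a : nat -> R) (k : nat) :
  (forall n, 0 <= a n) -> ex_series a -> a k <= Series a.
Proof.
  intros Ha Hs.
  assert (Hrest : 0 <= Series (fun n => a n - unitv k (a k) n)).
  { apply Series_nonneg; [| apply ex_series_minusR; auto using ex_series_unitv].
    intro n. specialize (Ha n). unfold unitv. destruct (Nat.eqb_spec n k) as [-> |]; lra. }
  rewrite Series_minus, Series_unitv in Hrest by auto using ex_series_unitv. lra.
Qed.

Lemma series_le_eq (a b : nat -> R) :
  (forall n, a n <= b n) -> ex_series a -> ex_series b -> Series a = Series b ->
  forall k, a k = b k.
Proof.
  intros Hab Ha Hb Heq k.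
  assert (Hk : b k - a k <= Series (fun n => b n - a n)).
  { apply (series_le_term (fun n => b n - a n)); [intro n; specialize (Hab n); lra |].
    apply ex_series_minusR; auto. }
  rewrite Series_minus, Heq in Hk by auto. specialize (Hab k). lra.
Qed.

Lemma c0_eventually_small (v : seqR) (M : R) :
  in_c0 v -> 0 < M -> exists N, forall n, (N <= n)%nat -> Rabs (v n) < M.
Proof.
  intros Hv HM. apply is_lim_seq_spec in Hv. destruct (Hv (mkposreal M HM)) as [N HN].
  exists N. intros n Hn. specialize (HN n Hn). simpl in HN. now rewrite Rminus_0_r in HN.
Qed.

Lemma c0_l1_summable (v x : seqR) : in_c0 v -> in_l1 x -> ex_series (fun k => v k * x k).
Proof.
  intros Hv Hx. destruct (c0_eventually_small v 1 Hv) as [N HN]; [lra |].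
  apply (ex_series_shiftR _ N). apply ex_series_Rle with (fun k => Rabs (x (N + k)%nat)).
  - intro n. rewrite Rabs_mult. specialize (HN (N + n)%nat ltac:(lia)).
    pose proof (Rabs_pos (x (N + n)%nat)). pose proof (Rabs_pos (v (N + n)%nat)). nra.
  - now apply (ex_series_shiftR (fun k => Rabs (x k)) N).
Qed.

Lemma l1_lincomb (a : R) (x : seqR) (b : R) (z : seqR) :
  in_l1 x -> in_l1 z -> in_l1 (fun k => a * x k + b * z k).
Proof.
  intros Hx Hz. apply ex_series_Rle with (fun k => Rabs a * Rabs (x k) + Rabs b * Rabs (z k)).
  - intro n. rewrite Rabs_Rabsolu, <- !Rabs_mult. apply Rabs_triang.
  - apply ex_series_plusR; apply ex_series_scalR; auto.
Qed.

Lemma l1_scal (a : R) (x : seqR) : in_l1 x -> in_l1 (fun k => a * x k).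
Proof.
  intro Hx. apply ex_series_Rle with (fun k => Rabs a * Rabs (x k)); [| apply ex_series_scalR; auto].
  intro n. rewrite Rabs_Rabsolu, Rabs_mult. lra.
Qed.

Lemma l1_unitv (k : nat) (a : R) : in_l1 (unitv k a).
Proof.
  apply ex_series_Rle with (unitv k (Rabs a)); [| apply ex_series_unitv].
  intro n. rewrite Rabs_Rabsolu. unfold unitv. destruct (n =? k)%nat; rewrite ?Rabs_R0; lra.
Qed.

Lemma norm1_unitv (k : nat) (a : R) : norm1 (unitv k a) = Rabs a.
Proof.
  unfold norm1. rewrite <- (Series_unitv k (Rabs a)). apply Series_ext.
  intro n. unfold unitv. destruct (n =? k)%nat; auto using Rabs_R0.
Qed.

Lemma norm1_nonneg (x : seqR) : in_l1 x -> 0 <= norm1 x.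
Proof. intro Hx. apply Series_nonneg; auto using Rabs_pos. Qed.

Lemma norm1_scal (a : R) (x : seqR) : norm1 (fun k => a * x k) = Rabs a * norm1 x.
Proof. unfold norm1. rewrite <- Series_scal_l. apply Series_ext. intro; apply Rabs_mult. Qed.

Lemma norm1_lincomb_le (a : R) (x : seqR) (b : R) (z : seqR) :
  0 <= a -> 0 <= b -> in_l1 x -> in_l1 z ->
  norm1 (fun k => a * x k + b * z k) <= a * norm1 x + b * norm1 z.
Proof.
  intros Ha Hb Hx Hz. unfold norm1.
  rewrite <- (Series_scal_l a), <- (Series_scal_l b), <- Series_plus
    by (apply ex_series_scalR; auto).
  apply Series_le.
  - intro n. split; [apply Rabs_pos |].
    eapply Rle_trans; [apply Rabs_triang |].
    rewrite !Rabs_mult, (Rabs_right a), (Rabs_right b) by lra. lra.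
  - apply ex_series_plusR; apply ex_series_scalR; auto.
Qed.

Lemma l1_square_summable (x : seqR) : in_l1 x -> ex_series (fun k => x k ^ 2).
Proof.
  intro Hx. apply ex_series_Rle with (fun k => norm1 x * Rabs (x k)); [| apply ex_series_scalR; auto].
  intro n. assert (Hn : Rabs (x n) <= norm1 x).
  { apply (series_le_term (fun k => Rabs (x k))); auto using Rabs_pos. }
  rewrite Rabs_right by apply Rle_ge, pow2_ge_0. rewrite <- pow2_abs.
  pose proof (Rabs_pos (x n)). nra.
Qed.

Lemma inner_lincomb (v : seqR) (a : R) (x : seqR) (b : R) (z : seqR) :
  in_c0 v -> in_l1 x -> in_l1 z ->
  inner v (fun k => a * x k + b * z k) = a * inner v x + b * inner v z.
Proof.
  intros Hv Hx Hz. unfold inner.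
  rewrite <- (Series_scal_l a), <- (Series_scal_l b), <- Series_plus
    by (apply ex_series_scalR, c0_l1_summable; auto).
  apply Series_ext. intro; ring.
Qed.

Lemma inner_scal (v : seqR) (a : R) (x : seqR) : inner v (fun k => a * x k) = a * inner v x.
Proof. unfold inner. rewrite <- Series_scal_l. apply Series_ext. intro; ring. Qed.

Lemma inner_unitv (v : seqR) (k : nat) (a : R) : inner v (unitv k a) = v k * a.
Proof.
  unfold inner. rewrite <- (Series_unitv k (v k * a)). apply Series_ext.
  intro n. unfold unitv. destruct (Nat.eqb_spec n k) as [-> |]; ring.
Qed.

Lemma fsum_ext (n : nat) (f g : nat -> R) :
  (forall j, (j < n)%nat -> f j = g j) -> fsum n f = fsum n g.
Proof. induction n as [| n IH]; simpl; intros H; auto. rewrite IH, H; auto. Qed.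

Lemma fsum_lin (n : nat) (a : R) (f : nat -> R) (b : R) (g : nat -> R) :
  fsum n (fun j => a * f j + b * g j) = a * fsum n f + b * fsum n g.
Proof. induction n as [| n IH]; simpl; [ring | rewrite IH; ring]. Qed.

Lemma fsum_scal (n : nat) (a : R) (f : nat -> R) :
  fsum n (fun j => a * f j) = a * fsum n f.
Proof. induction n as [| n IH]; simpl; [ring | rewrite IH; ring]. Qed.

Lemma fsum_le (n : nat) (f g : nat -> R) :
  (forall j, (j < n)%nat -> f j <= g j) -> fsum n f <= fsum n g.
Proof. induction n as [| n IH]; simpl; intros H; [lra | apply Rplus_le_compat; auto]. Qed.

Lemma fsum_squares_le0 (n : nat) (f : nat -> R) :
  fsum n (fun j => f j ^ 2) <= 0 -> forall j, (j < n)%nat -> f j = 0.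
Proof.
  assert (Hpos : forall p, 0 <= fsum p (fun j => f j ^ 2)).
  { intro p. induction p as [| p IH]; cbn [fsum]; [lra | pose proof (pow2_ge_0 (f p)); lra]. }
  induction n as [| n IH]; cbn [fsum]; intros H j Hj; [lia |].
  pose proof (Hpos n). pose proof (pow2_ge_0 (f n)).
  destruct (Nat.eq_dec j n) as [-> | Hne]; [nra | apply IH; [lra | lia]].
Qed.

Lemma Ladj_c0 (n : nat) (u : nat -> seqR) (c : nat -> R) :
  (forall j, (j < n)%nat -> in_c0 (u j)) -> in_c0 (Ladj n u c).
Proof.
  induction n as [| n IH]; intros Hu; unfold in_c0, Ladj; simpl.
  - apply is_lim_seq_const.
  - replace (Finite 0) with (Finite (0 + c n * 0)) by (f_equal; ring).
    apply is_lim_seq_plus'; [apply IH; auto | apply (is_lim_seq_scal_l _ _ 0), Hu; lia].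
Qed.

Lemma duality (n : nat) (u : nat -> seqR) (c : nat -> R) (x : seqR) :
  (forall j, (j < n)%nat -> in_c0 (u j)) -> in_l1 x ->
  fsum n (fun j => c j * Lop n u x j) = Series (fun k => Ladj n u c k * x k).
Proof.
  intros Hu Hx. unfold Lop. induction n as [| n IH]; simpl.
  - rewrite <- Series_zero. apply Series_ext. intro; unfold Ladj; simpl; ring.
  - rewrite IH by auto. unfold inner. rewrite <- Series_scal_l, <- Series_plus.
    + apply Series_ext. intro; unfold Ladj; simpl; ring.
    + apply c0_l1_summable; auto. apply Ladj_c0; auto.
    + apply ex_series_scalR, c0_l1_summable; auto.
Qed.

Lemma Ladj_opp (n : nat) (u : nat -> seqR) (c : nat -> R) :
  Ladj n u (fun j => - c j) = fun k => - Ladj n u c k.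
Proof.
  apply functional_extensionality. intro k. unfold Ladj.
  replace (- fsum n (fun j => c j * u j k)) with (-1 * fsum n (fun j => c j * u j k)) by ring.
  rewrite <- fsum_scal. apply fsum_ext. intros; ring.
Qed.

(** The carrier [V] is an
    abstract real vector space, known only through its linear combinations
    [comb a v b w = a v + b w]; all properties are required on a domain [D]. *)

Section FiniteHahnBanach.

Variable V : Type.
Variable comb : R -> V -> R -> V -> V.

Definition comb_closed (D : V -> Prop) : Prop :=
  forall a v b w, D v -> D w -> D (comb a v b w).

Definition linear_on (D : V -> Prop) (f : V -> R) : Prop :=
  forall a v b w, D v -> D w -> f (comb a v b w) = a * f v + b * f w.

Definition sublinear_on (D : V -> Prop) (f : V -> R) : Prop :=
  forall a v b w, 0 < a -> 0 < b -> D v -> D w -> f (comb a v b w) <= a * f v + b * f w.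

Section OneConstraint.

Variables (D : V -> Prop) (phi F d : V -> R).
Hypotheses (D_closed : comb_closed D) (phi_sub : sublinear_on D phi)
  (F_lin : linear_on D F) (d_lin : linear_on D d).
Hypothesis F_le_phi : forall v, D v -> d v = 0 -> F v <= phi v.

(** The gap [phi - F] controls [F - phi] across the hyperplane [d = 0]: combine
    [v1] and [v2] into a point of the hyperplane. *)
Lemma hb_gap (v1 v2 : V) : D v1 -> D v2 -> 0 < d v1 -> d v2 < 0 ->
  d v1 * (F v2 - phi v2) <= - d v2 * (phi v1 - F v1).
Proof.
  intros H1 H2 Hd1 Hd2.
  set (w := comb (- d v2) v1 (d v1) v2).
  assert (Hw : F w <= phi w).
  { apply F_le_phi; [apply D_closed; auto |]. unfold w. rewrite d_lin by auto. ring. }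
  assert (Hphi : phi w <= - d v2 * phi v1 + d v1 * phi v2) by (apply phi_sub; auto; lra).
  unfold w in Hw, Hphi. rewrite F_lin in Hw by auto. lra.
Qed.

Lemma hb_step : exists a, forall v, D v -> F v + a * d v <= phi v.
Proof.
  set (neg v := comb (-1) v 0 v).
  assert (Hneg : forall v, D v -> D (neg v) /\ d (neg v) = - d v).
  { intros v Hv. unfold neg. split; [apply D_closed; auto | rewrite d_lin by auto; ring]. }
  destruct (classic (exists v, D v /\ d v < 0)) as [[v0 [Hv0 Hd0]] | Hnone].
  - set (E := fun r => exists v, D v /\ d v < 0 /\ r = (F v - phi v) / - d v).
    assert (E_ub : forall r v1, E r -> D v1 -> 0 < d v1 -> r <= (phi v1 - F v1) / d v1).
    { intros r v1 [v2 [H2 [Hd2 ->]]] H1 Hd1.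
      apply Rmult_le_reg_r with (d v1 * - d v2); [nra |].
      pose proof (hb_gap v1 v2 H1 H2 Hd1 Hd2).
      replace ((F v2 - phi v2) / - d v2 * (d v1 * - d v2)) with (d v1 * (F v2 - phi v2)) by (field; lra).
      replace ((phi v1 - F v1) / d v1 * (d v1 * - d v2)) with (- d v2 * (phi v1 - F v1)) by (field; lra).
      lra. }
    destruct (Hneg v0 Hv0) as [Hn0 Hdn0].
    destruct (completeness E) as [a [Ha_ub Ha_lub]].
    + exists ((phi (neg v0) - F (neg v0)) / d (neg v0)). intros r Hr. apply E_ub; auto; lra.
    + exists ((F v0 - phi v0) / - d v0), v0. auto.
    + exists a. intros v Hv.
      destruct (total_order_T (d v) 0) as [[Hd | Hd] | Hd].
      * assert (Hr : (F v - phi v) / - d v <= a) by (apply Ha_ub; exists v; auto).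
        apply Rmult_le_compat_r with (r := - d v) in Hr; [| lra].
        replace ((F v - phi v) / - d v * - d v) with (F v - phi v) in Hr by (field; lra). lra.
      * rewrite Hd, Rmult_0_r, Rplus_0_r. auto.
      * assert (Hr : a <= (phi v - F v) / d v) by (apply Ha_lub; intros r Hr; apply E_ub; auto).
        apply Rmult_le_compat_r with (r := d v) in Hr; [| lra].
        replace ((phi v - F v) / d v * d v) with (phi v - F v) in Hr by (field; lra). lra.
  - exists 0. intros v Hv. rewrite Rmult_0_l, Rplus_0_r.
    destruct (total_order_T (d v) 0) as [[Hd | Hd] | Hd]; auto.
    + exfalso. apply Hnone. exists v. auto.
    + exfalso. apply Hnone. exists (neg v). destruct (Hneg v Hv). split; auto; lra.
Qed.

End OneConstraint.

Lemma finite_hahn_banach (D : V -> Prop) (phi : V -> R) (g : nat -> V -> R) (n : nat) :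
  comb_closed D -> sublinear_on D phi -> (forall j, (j < n)%nat -> linear_on D (g j)) ->
  forall F : V -> R, linear_on D F ->
  (forall v, D v -> (forall j, (j < n)%nat -> g j v = 0) -> F v <= phi v) ->
  exists c : nat -> R, forall v, D v -> F v + fsum n (fun j => c j * g j v) <= phi v.
Proof.
  intros D_closed phi_sub g_lin. induction n as [| n IH]; intros F F_lin HF.
  - exists (fun _ => 0). intros v Hv. simpl. rewrite Rplus_0_r. apply HF; auto. intros; lia.
  - set (Dn := fun v => D v /\ forall j, (j < n)%nat -> g j v = 0).
    destruct (hb_step Dn phi F (g n)) as [a Ha].
    + intros a v b w [Hv Hgv] [Hw Hgw]. split; [apply D_closed; auto |].
      intros j Hj. rewrite g_lin, Hgv, Hgw by (auto; lia). ring.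
    + intros a v b w Ha Hb [Hv _] [Hw _]. apply phi_sub; auto.
    + intros a v b w [Hv _] [Hw _]. apply F_lin; auto.
    + intros a v b w [Hv _] [Hw _]. apply g_lin; auto.
    + intros v [Hv Hgv] Hgn. apply HF; auto.
      intros j Hj. destruct (Nat.eq_dec j n) as [-> | Hne]; auto. apply Hgv. lia.
    + destruct (IH ltac:(auto) (fun v => F v + a * g n v)) as [c Hc].
      * intros b v b' w Hv Hw. rewrite F_lin, g_lin by auto. ring.
      * intros v Hv Hg. apply Ha. split; auto.
      * exists (fun j => if Nat.eqb j n then a else c j). intros v Hv. simpl.
        rewrite Nat.eqb_refl, (fsum_ext n _ (fun j => c j * g j v)).
        -- specialize (Hc v Hv). lra.
        -- intros j Hj. destruct (Nat.eqb_spec j n); [lia | reflexivity].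
Qed.

End FiniteHahnBanach.

Definition subgrad_l1 (g x : seqR) : Prop :=
  forall k, Rabs (g k) <= 1 /\ g k * x k = Rabs (x k).

Lemma subgrad_l1_ext (g h x : seqR) : (forall k, g k = h k) -> subgrad_l1 g x -> subgrad_l1 h x.
Proof. intros Hgh Hg k. rewrite <- Hgh. apply Hg. Qed.

Lemma scalar_prox_fixed (g x : R) :
  (forall w, / 2 * ((x + g) - x) ^ 2 + Rabs x <= / 2 * ((x + g) - w) ^ 2 + Rabs w) <->
  Rabs g <= 1 /\ g * x = Rabs x.
Proof.
  split.
  - intro Hmin.
    assert (Hgap : forall t, 0 <= t ^ 2 / 2 - g * t + Rabs (x + t) - Rabs x).
    { intro t. specialize (Hmin (x + t)). lra. }
    assert (Hg : -1 <= g <= 1).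
    { split; apply Rnot_lt_le; intro Hlt.
      - specialize (Hgap (g + 1)). pose proof (Rabs_triang x (g + 1)) as Htri.
        rewrite (Rabs_left (g + 1)) in Htri by lra. nra.
      - specialize (Hgap (g - 1)). pose proof (Rabs_triang x (g - 1)) as Htri.
        rewrite (Rabs_right (g - 1)) in Htri by lra. nra. }
    split; [apply Rabs_le; lra |].
    destruct (total_order_T x 0) as [[Hx | Hx] | Hx].
    + rewrite Rabs_left by lra. destruct (Req_dec g (-1)) as [-> | Hne]; [ring | exfalso].
      set (t := Rmin (- x) (g + 1)).
      assert (t <= - x) by apply Rmin_l. assert (t <= g + 1) by apply Rmin_r.
      assert (0 < t) by (apply Rmin_glb_lt; lra).
      specialize (Hgap t). rewrite (Rabs_left x), (Rabs_left1 (x + t)) in Hgap by lra. nra.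
    + subst. rewrite Rabs_R0. ring.
    + rewrite Rabs_right by lra. destruct (Req_dec g 1) as [-> | Hne]; [ring | exfalso].
      set (t := Rmin x (1 - g)).
      assert (t <= x) by apply Rmin_l. assert (t <= 1 - g) by apply Rmin_r.
      assert (0 < t) by (apply Rmin_glb_lt; lra).
      specialize (Hgap (- t)). rewrite (Rabs_right x), (Rabs_right (x + - t)) in Hgap by lra. nra.
  - intros [Hg Hgx] w.
    assert (Hgw : g * w <= Rabs w).
    { eapply Rle_trans; [apply Rle_abs |]. rewrite Rabs_mult.
      pose proof (Rabs_pos w). nra. }
    pose proof (pow2_ge_0 (x - w)). nra.
Qed.

Lemma prox_l1_gap (x s w : seqR) : in_l1 x -> in_l1 w -> fin_supp s ->
  is_series
    (fun j => (/ 2 * (x j - s j - w j) ^ 2 + Rabs (w j)) - (/ 2 * (x j - s j - x j) ^ 2 + Rabs (x j)))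
    ((/ 2 * norm2sq (fun j => x j - s j - w j) + norm1 w)
     - (/ 2 * norm2sq (fun j => x j - s j - x j) + norm1 x)).
Proof.
  intros Hx Hw [N HN].
  assert (Hs2 : ex_series (fun j => s j ^ 2)).
  { apply ex_series_fin_supp. exists N. intros k Hk. rewrite HN by auto. ring. }
  assert (Hxs : ex_series (fun j => (x j - s j - x j) ^ 2)).
  { apply ex_series_fin_supp. exists N. intros k Hk. rewrite HN by auto. ring. }
  assert (Hws : ex_series (fun j => (x j - s j - w j) ^ 2)).
  { apply ex_series_Rle with (fun j => 2 * (1 * x j + -1 * w j) ^ 2 + 2 * s j ^ 2).
    - intro n. rewrite Rabs_right by apply Rle_ge, pow2_ge_0.
      pose proof (pow2_ge_0 (x n - w n + s n)). nra.
    - apply ex_series_plusR; apply ex_series_scalR; auto.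
      apply l1_square_summable, l1_lincomb; auto. }
  assert (Hw' : ex_series (fun j => / 2 * (x j - s j - w j) ^ 2 + Rabs (w j)))
    by (apply ex_series_plusR; [apply ex_series_scalR |]; auto).
  assert (Hx' : ex_series (fun j => / 2 * (x j - s j - x j) ^ 2 + Rabs (x j)))
    by (apply ex_series_plusR; [apply ex_series_scalR |]; auto).
  unfold norm2sq, norm1. rewrite <- !Series_scal_l, <- !Series_plus, <- Series_minus
    by (auto; apply ex_series_scalR; auto).
  apply Series_correct, ex_series_minusR; auto.
Qed.

Lemma prox_l1_fixed_iff (x s : seqR) : in_l1 x -> fin_supp s ->
  is_prox_l1 (fun k => x k - s k) x <-> subgrad_l1 (fun k => - s k) x.
Proof.
  intros Hx Hs. split.
  - intros [_ Hmin] k. apply scalar_prox_fixed. intro w.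
    set (xw := fun j => x j + unitv k (w - x k) j).
    assert (Hxw : in_l1 xw).
    { apply ex_series_Rle with (fun j => Rabs (x j) + Rabs (unitv k (w - x k) j)).
      - intro n. rewrite Rabs_Rabsolu. apply Rabs_triang.
      - apply ex_series_plusR; [exact Hx | apply l1_unitv]. }
    pose proof (Hmin xw Hxw) as Hle.
    pose proof (is_series_unique _ _ (prox_l1_gap x s xw Hx Hxw Hs)) as Hgap.
    rewrite (Series_ext _ (unitv k ((/ 2 * (x k - s k - w) ^ 2 + Rabs w)
                                     - (/ 2 * (x k - s k - x k) ^ 2 + Rabs (x k))))) in Hgap.
    + rewrite Series_unitv in Hgap. lra.
    + intro n. unfold xw, unitv. destruct (Nat.eqb_spec n k) as [-> |].
      * replace (x k + (w - x k)) with w by ring. reflexivity.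
      * rewrite Rplus_0_r. ring.
  - intro Hsub. split; [exact Hx |]. intros w Hw.
    pose proof (prox_l1_gap x s w Hx Hw Hs) as Hgap.
    assert (Hnonneg : 0 <= Series (fun j => (/ 2 * (x j - s j - w j) ^ 2 + Rabs (w j))
                                         - (/ 2 * (x j - s j - x j) ^ 2 + Rabs (x j)))).
    { apply Series_nonneg; [| eexists; exact Hgap].
      intro j. pose proof (proj2 (scalar_prox_fixed _ _) (Hsub j) (w j)). lra. }
    rewrite (is_series_unique _ _ Hgap) in Hnonneg. lra.
Qed.

(** [c = prox_{iota_y^*}(c + a)] iff [a = y]: the prox objective splits into
    coordinates [/2 (c_j + a_j - d_j)^2 + y_j d_j]. *)
Lemma prox_Rm_iff (m : nat) (y a c : nat -> R) :
  is_prox_Rm m (iota_y_conj m y) (fun j => c j + a j) c <-> eqRm m a y.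
Proof.
  unfold is_prox_Rm, iota_y_conj.
  set (q := fun j (t : R) => / 2 * (c j + a j - t) ^ 2 + y j * t).
  assert (Hobj : forall d, / 2 * fsum m (fun j => (c j + a j - d j) ^ 2) + fsum m (fun j => y j * d j)
                          = fsum m (fun j => q j (d j))).
  { intro d. rewrite <- (Rmult_1_l (fsum m (fun j => y j * d j))), <- fsum_lin.
    apply fsum_ext. intros; unfold q; ring. }
  split.
  - intros Hmin. specialize (Hmin (fun j => c j + a j - y j)). rewrite !Hobj in Hmin.
    assert (Hsq : fsum m (fun j => (a j - y j) ^ 2) <= 0).
    { replace (fsum m (fun j => (a j - y j) ^ 2))
        with (2 * fsum m (fun j => q j (c j)) + -2 * fsum m (fun j => q j (c j + a j - y j))).
      - lra.
      - rewrite <- fsum_lin. apply fsum_ext. intros j _. unfold q. field. }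
    intros j Hj. pose proof (fsum_squares_le0 m (fun j => a j - y j) Hsq j Hj). lra.
  - intros Hay d. rewrite !Hobj. apply fsum_le. intros j Hj. unfold q. rewrite Hay by auto.
    pose proof (pow2_ge_0 (c j - d j)). nra.
Qed.

Lemma norm_inf_bound (g : seqR) (B : R) : (forall k, Rabs (g k) <= B) ->
  (forall k, Rabs (g k) <= norm_inf g) /\ norm_inf g <= B.
Proof.
  intro HB. unfold norm_inf.
  pose proof (Sup_seq_correct (fun j => Finite (Rabs (g j)))) as Hsup.
  assert (Hge : forall k, Rbar_le (Rabs (g k)) (Sup_seq (fun j => Finite (Rabs (g j)))))
    by (intro k; apply Sup_seq_minor_le with k; simpl; lra).
  destruct (Sup_seq (fun j => Finite (Rabs (g j)))) as [l | |]; simpl in Hsup, Hge |- *.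
  - split; [exact Hge |]. apply Rnot_lt_le. intro Hlt.
    destruct (Hsup (mkposreal (l - B) ltac:(lra))) as [_ [n Hn]]. simpl in Hn.
    specialize (HB n). lra.
  - destruct (Hsup B) as [n Hn]. simpl in Hn. specialize (HB n). lra.
  - specialize (Hsup 0 0%nat). simpl in Hsup. pose proof (Rabs_pos (g 0%nat)). lra.
Qed.

(** ... and [||g||_inf = 1] bounds every [|g_k|] (an unbounded [g] has [norm_inf g = 0]). *)
Lemma norm_inf_one (g : seqR) : norm_inf g = 1 -> forall k, Rabs (g k) <= 1.
Proof.
  unfold norm_inf. intros H1 k.
  assert (Hge : Rbar_le (Rabs (g k)) (Sup_seq (fun j => Finite (Rabs (g j)))))
    by (apply Sup_seq_minor_le with k; simpl; lra).
  destruct (Sup_seq (fun j => Finite (Rabs (g j)))); simpl in H1, Hge; lra.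
Qed.

(** For [g] in [c0], [|g_k| = ||g||_inf] holds only for finitely many [k]
    (or [g = 0]), so [S g] is finitely supported. *)
Lemma trunc_fin_supp (g : seqR) : in_c0 g -> fin_supp (trunc g).
Proof.
  intro Hg. unfold trunc. destruct (Rle_dec (norm_inf g) 0) as [Hle | Hgt].
  - exists 0%nat. intros k _. destruct (Req_EM_T (Rabs (g k)) (norm_inf g)); auto.
    apply Rabs_eq_0. pose proof (Rabs_pos (g k)). lra.
  - destruct (c0_eventually_small g (norm_inf g) Hg) as [N HN]; [lra |].
    exists N. intros k Hk. destruct (Req_EM_T (Rabs (g k)) (norm_inf g)); auto.
    specialize (HN k Hk). lra.
Qed.

Lemma trunc_opp (g : seqR) (k : nat) : trunc (fun j => - g j) k = - trunc g k.
Proof.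
  unfold trunc, norm_inf.
  rewrite (Sup_seq_ext (fun j => Finite (Rabs (- g j))) (fun j => Finite (Rabs (g j))))
    by (intro; now rewrite Rabs_Ropp).
  rewrite Rabs_Ropp. destruct (Req_EM_T _ _); ring.
Qed.

Lemma subgrad_trunc (g x : seqR) : subgrad_l1 g x -> subgrad_l1 (trunc g) x.
Proof.
  intros Hg k. destruct (norm_inf_bound g 1 (fun j => proj1 (Hg j))) as [Hle Hle1].
  destruct (Hg k) as [Hgk Hgxk]. unfold trunc.
  destruct (Req_EM_T (Rabs (g k)) (norm_inf g)) as [| Hne]; [auto |].
  destruct (Req_dec (x k) 0) as [Hx0 | Hx0].
  - rewrite Hx0, Rabs_R0. split; lra.
  - exfalso. apply Hne. specialize (Hle k).
    assert (Habs : Rabs (g k) * Rabs (x k) = Rabs (x k))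
      by (rewrite <- Rabs_mult, Hgxk; apply Rabs_Rabsolu).
    pose proof (Rabs_pos_lt _ Hx0). nra.
Qed.

(** ... and, when [x <> 0], a truncated subgradient comes from a subgradient:
    some coordinate forces [||g||_inf = 1]. *)
Lemma subgrad_of_trunc (g x : seqR) :
  subgrad_l1 (trunc g) x -> (exists k, x k <> 0) -> subgrad_l1 g x.
Proof.
  intros Hs [k0 Hk0].
  assert (Hsupp : forall k, x k <> 0 -> trunc g k = g k /\ Rabs (g k) = norm_inf g).
  { intros k Hk. destruct (Hs k) as [_ Hsk]. unfold trunc in Hsk |- *.
    destruct (Req_EM_T (Rabs (g k)) (norm_inf g)) as [He | Hne]; [auto |].
    exfalso. pose proof (Rabs_pos_lt _ Hk). rewrite Rmult_0_l in Hsk. lra. }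
  assert (Hnorm : norm_inf g = 1).
  { destruct (Hsupp k0 Hk0) as [Htr Habs]. destruct (Hs k0) as [_ Hsk0].
    rewrite Htr in Hsk0. rewrite <- Habs.
    assert (Rabs (g k0) * Rabs (x k0) = Rabs (x k0))
      by (rewrite <- Rabs_mult, Hsk0; apply Rabs_Rabsolu).
    pose proof (Rabs_pos_lt _ Hk0). nra. }
  intro k. split; [apply norm_inf_one; auto |].
  destruct (Req_dec (x k) 0) as [Hx0 | Hx0].
  - rewrite Hx0, Rabs_R0. ring.
  - destruct (Hsupp k Hx0) as [<- _]. apply Hs.
Qed.

Section Constraints.

Variables (m : nat) (u : nat -> seqR) (y : nat -> R).
Hypothesis u_c0 : forall j, (j < m)%nat -> in_c0 (u j).

Definition feasible (x : seqR) : Prop := eqRm m (Lop m u x) y.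

Definition min_norm (xh : seqR) : Prop :=
  forall x, in_l1 x -> feasible x -> norm1 xh <= norm1 x.

Definition multiplier (phi : seqR -> R) (lam : R) (c : nat -> R) : Prop :=
  forall x t, in_l1 x -> lam * t + fsum m (fun j => c j * (Lop m u x j - t * y j)) <= phi x.

(** If the positively homogeneous sublinear [phi >= 0] is at least [lam >= 0] on
    the feasible set, then [lam * t + <c, L x - t y> <= phi x] for some [c]:
    finite Hahn-Banach on the pairs [(x, t)], with constraints [L x = t y]. *)
Lemma lagrange_multiplier (phi : seqR -> R) (lam : R) :
  0 <= lam -> (forall x, in_l1 x -> 0 <= phi x) ->
  (forall a x b z, 0 < a -> 0 < b -> in_l1 x -> in_l1 z ->
     phi (fun k => a * x k + b * z k) <= a * phi x + b * phi z) ->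
  (forall a x, 0 < a -> phi (fun k => a * x k) = a * phi x) ->
  (forall x, in_l1 x -> feasible x -> lam <= phi x) ->
  exists c : nat -> R, multiplier phi lam c.
Proof.
  intros Hlam Hphi_pos Hphi_sub Hphi_hom Hphi_feas.
  set (comb (a : R) (p : seqR * R) (b : R) (q : seqR * R) :=
         (fun k => a * fst p k + b * fst q k, a * snd p + b * snd q)).
  destruct (finite_hahn_banach (seqR * R) comb (fun p : seqR * R => in_l1 (fst p))
              (fun p : seqR * R => phi (fst p)) (fun j (p : seqR * R) => Lop m u (fst p) j - snd p * y j) m)
    with (F := fun p : seqR * R => lam * snd p)
    as [c Hc].
  - intros a p b q Hp Hq. apply l1_lincomb; auto.
  - intros a p b q Ha Hb Hp Hq. apply Hphi_sub; auto.
  - intros j Hj a p b q Hp Hq. simpl. unfold Lop. rewrite inner_lincomb by auto. ring.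
  - intros a p b q Hp Hq. simpl. ring.
  - intros [x t] Hx Hxt. simpl in Hx, Hxt |- *.
    destruct (Rle_dec t 0) as [Ht | Ht].
    + pose proof (Hphi_pos x Hx). nra.
    + assert (Hfeas : feasible (fun k => / t * x k)).
      { intros j Hj. unfold Lop. rewrite inner_scal.
        specialize (Hxt j Hj). unfold Lop in Hxt. field_simplify_eq; lra. }
      assert (Hle := Hphi_feas _ (l1_scal (/ t) x Hx) Hfeas).
      rewrite (Hphi_hom (/ t) x) in Hle by (apply Rinv_0_lt_compat; lra).
      apply Rmult_le_compat_r with (r := t) in Hle; [| lra].
      replace (/ t * phi x * t) with (phi x) in Hle by (field; lra). lra.
  - exists c. intros x t Hx. apply (Hc (x, t) Hx).
Qed.

(** Testing a multiplier at [x = 0] (written [unitv 0 0]) and [t = 1, -1]. *)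
Lemma multiplier_rhs (phi : seqR -> R) (lam : R) (c : nat -> R) :
  phi (unitv 0 0) = 0 -> multiplier phi lam c -> fsum m (fun j => c j * y j) = lam.
Proof.
  intros Hphi0 Hc.
  assert (Ht : forall t, lam * t - t * fsum m (fun j => c j * y j) <= 0).
  { intro t. specialize (Hc (unitv 0 0) t (l1_unitv 0 0)). rewrite Hphi0 in Hc.
    rewrite (fsum_ext m _ (fun j => - t * (c j * y j))), fsum_scal in Hc; [lra |].
    intros j _. unfold Lop. rewrite inner_unitv. ring. }
  pose proof (Ht 1). pose proof (Ht (-1)). lra.
Qed.

(** Testing a multiplier at [x = a e_k] and [t = 0] bounds [L^* c]. *)
Lemma multiplier_coord (phi : seqR -> R) (lam : R) (c : nat -> R) (k : nat) (a : R) :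
  multiplier phi lam c -> a * Ladj m u c k <= phi (unitv k a).
Proof.
  intro Hc. specialize (Hc (unitv k a) 0 (l1_unitv k a)).
  unfold Ladj. rewrite <- fsum_scal.
  rewrite (fsum_ext m _ (fun j => a * (c j * u j k))) in Hc; [lra |].
  intros j _. unfold Lop. rewrite inner_unitv. ring.
Qed.

Lemma objective_feasible (x : seqR) : feasible x -> objective m u y x = Finite (norm1 x).
Proof.
  intro Hx. unfold objective, iota_y.
  destruct (excluded_middle_informative _) as [_ | Hn]; [| contradiction].
  simpl. now rewrite Rplus_0_r.
Qed.

Lemma objective_infeasible (x : seqR) : ~ feasible x -> objective m u y x = p_infty.
Proof.
  intro Hx. unfold objective, iota_y.
  destruct (excluded_middle_informative _) as [Hf | _]; [contradiction | reflexivity].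
Qed.

Lemma solution_iff_min_norm (xh : seqR) :
  in_l1 xh -> feasible xh -> (is_solution m u y xh <-> min_norm xh).
Proof.
  intros Hxh Hfeas. unfold is_solution, min_norm. rewrite objective_feasible by auto.
  split.
  - intros [_ Hmin] x Hx Hxf. specialize (Hmin x Hx). now rewrite objective_feasible in Hmin.
  - intros Hmin. split; [exact Hxh |]. intros x Hx.
    destruct (classic (feasible x)) as [Hxf | Hxf].
    + rewrite objective_feasible by auto. apply Hmin; auto.
    + now rewrite objective_infeasible.
Qed.

(** Since the [u_j] are independent, [L] maps onto [R^m], so a solution of the
    penalized problem is feasible.  Otherwise the feasible set is empty and a
    multiplier for [phi = 0], [lam = 1] gives [L^* c = 0] with [<c, y> = 1]. *)
Lemma solution_feasible (xh : seqR) :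
  lin_indep m u -> is_solution m u y xh -> feasible xh.
Proof.
  intros Hind [Hxh Hmin]. destruct (classic (feasible xh)) as [| Hinf]; [assumption | exfalso].
  destruct (lagrange_multiplier (fun _ => 0) 1) as [c Hc]; try (intros; lra).
  - intros x Hx Hxf. specialize (Hmin x Hx).
    rewrite objective_infeasible, objective_feasible in Hmin by auto. contradiction.
  - assert (Hy := multiplier_rhs _ _ c eq_refl Hc).
    assert (HL : forall k, Ladj m u c k = 0).
    { intro k. pose proof (multiplier_coord _ _ c k 1 Hc). pose proof (multiplier_coord _ _ c k (-1) Hc).
      lra. }
    rewrite (fsum_ext m _ (fun j => 0 * y j)), fsum_scal in Hy; [lra |].
    intros j Hj. rewrite (Hind c HL j Hj). ring.
Qed.

(** A least-norm point admits a dual certificate [c]: [L^* c] is a subgradient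
    of [||.||_1] at [xh] (multiplier for [phi = ||.||_1], [lam = ||xh||_1]). *)
Lemma dual_certificate (xh : seqR) :
  in_l1 xh -> feasible xh -> min_norm xh -> exists c, subgrad_l1 (Ladj m u c) xh.
Proof.
  intros Hxh Hfeas Hmin.
  destruct (lagrange_multiplier norm1 (norm1 xh)) as [c Hc].
  - apply norm1_nonneg; auto.
  - apply norm1_nonneg.
  - intros; apply norm1_lincomb_le; auto; lra.
  - intros a x Ha. rewrite norm1_scal, Rabs_right by lra. reflexivity.
  - exact Hmin.
  - assert (Hy : fsum m (fun j => c j * y j) = norm1 xh)
      by (apply (multiplier_rhs norm1); [rewrite norm1_unitv; apply Rabs_R0 | exact Hc]).
    assert (Hbound : forall k, Rabs (Ladj m u c k) <= 1).
    { intro k. pose proof (multiplier_coord _ _ c k 1 Hc). pose proof (multiplier_coord _ _ c k (-1) Hc).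
      rewrite !norm1_unitv, Rabs_R1, Rabs_m1 in *. apply Rabs_le. lra. }
    assert (Hle : forall k, Ladj m u c k * xh k <= Rabs (xh k)).
    { intro k. eapply Rle_trans; [apply Rle_abs |]. rewrite Rabs_mult.
      pose proof (Hbound k). pose proof (Rabs_pos (xh k)). nra. }
    assert (Hsum : Series (fun k => Ladj m u c k * xh k) = norm1 xh).
    { rewrite <- duality, <- Hy by auto. apply fsum_ext. intros j Hj. now rewrite Hfeas. }
    exists c. intro k. split; [auto |].
    apply (series_le_eq (fun k => Ladj m u c k * xh k) (fun k => Rabs (xh k))); auto.
    apply c0_l1_summable; auto. apply Ladj_c0; auto.
Qed.

Lemma certificate_optimal (xh : seqR) (c : nat -> R) :
  in_l1 xh -> feasible xh -> subgrad_l1 (Ladj m u c) xh -> min_norm xh.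
Proof.
  intros Hxh Hfeas Hsub x Hx Hxf.
  assert (Hxh_eq : norm1 xh = Series (fun k => Ladj m u c k * xh k))
    by (apply Series_ext; intro k; symmetry; apply Hsub).
  assert (Hpair : Series (fun k => Ladj m u c k * xh k) = Series (fun k => Ladj m u c k * x k)).
  { rewrite <- !duality by auto. apply fsum_ext. intros j Hj. now rewrite Hfeas, Hxf. }
  rewrite Hxh_eq, Hpair. unfold norm1. apply series_le; auto.
  - intro k. eapply Rle_trans; [apply Rle_abs |]. rewrite Rabs_mult.
    pose proof (proj1 (Hsub k)). pose proof (Rabs_pos (x k)). nra.
  - apply c0_l1_summable; auto. apply Ladj_c0; auto.
Qed.

Lemma trunc_certificate_optimal (xh : seqR) (c : nat -> R) :
  in_l1 xh -> feasible xh -> subgrad_l1 (trunc (Ladj m u c)) xh -> min_norm xh.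
Proof.
  intros Hxh Hfeas Hsub. destruct (classic (exists k, xh k <> 0)) as [Hnz | Hzero].
  - apply (certificate_optimal xh c); auto. apply subgrad_of_trunc; auto.
  - intros x Hx _. replace (norm1 xh) with 0; [apply norm1_nonneg; auto |].
    unfold norm1. rewrite <- Series_zero. apply Series_ext. intro k.
    destruct (Req_dec (xh k) 0) as [-> | Hk]; [symmetry; apply Rabs_R0 |].
    exfalso. apply Hzero. now exists k.
Qed.

End Constraints.

Theorem mainTheorem15 (m : nat) (u : nat -> seqR) (y : nat -> R) (xh : seqR) :
  (forall j, (j < m)%nat -> in_c0 (u j)) ->
  lin_indep m u ->
  in_l1 xh ->
  (is_solution m u y xh <->
   exists c : nat -> R,
     is_prox_Rm m (iota_y_conj m y) (fun j => c j + Lop m u xh j) c /\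
     is_prox_l1 (fun k => xh k - trunc (Ladj m u c) k) xh).
Proof.
  intros Hu Hind Hxh.
  assert (Hsupp : forall c, fin_supp (trunc (Ladj m u c)))
    by (intro c; apply trunc_fin_supp, Ladj_c0, Hu).
  (* [- S L^* c = S L^* (-c)]: the prox condition says [S L^* (-c)] is a subgradient. *)
  assert (Hneg : forall c k, - trunc (Ladj m u c) k = trunc (Ladj m u (fun j => - c j)) k)
    by (intros c k; now rewrite Ladj_opp, trunc_opp).
  split.
  - intros Hsol.
    pose proof (solution_feasible m u y Hu xh Hind Hsol) as Hfeas.
    apply (solution_iff_min_norm m u y xh Hxh Hfeas) in Hsol.
    destruct (dual_certificate m u y Hu xh Hxh Hfeas Hsol) as [c Hc].
    exists (fun j => - c j). split.
    + apply prox_Rm_iff, Hfeas.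
    + apply prox_l1_fixed_iff; [exact Hxh | apply Hsupp |].
      apply (subgrad_l1_ext (trunc (Ladj m u c))); [| apply subgrad_trunc, Hc].
      intro k. now rewrite <- Hneg, Ropp_involutive.
  - intros [c [Hy Hprox]].
    apply prox_Rm_iff in Hy.
    apply prox_l1_fixed_iff in Hprox; [| exact Hxh | apply Hsupp].
    apply (solution_iff_min_norm m u y xh Hxh Hy).
    apply (trunc_certificate_optimal m u y Hu xh (fun j => - c j) Hxh Hy).
    apply (subgrad_l1_ext _ _ _ (fun k => Hneg c k) Hprox).
Qed.
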